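(* Let $\tau=2\pi P/Q$ and $\beta=\nu/P+Q/2\pmod 1$ ($P,Q,\nu$ integers, $Q\ge1$, $P\ne0$), and let $d$ be the integer part of $(Q+1)/2$. If $P$ and $Q$ are coprime (so that $Q=q$, $P=p$), then the $d\times d$ matrix $\mathbf G^{(d)}=\{G_{jk}\}_{1\le j,k\le d}$ is nonsingular.
   Context: Write $P/Q=p/q$ with $p,q$ coprime. $G_{jk}=\frac1Q\sum_{s=0}^{Q-1}e^{2\pi i s(j-k)/Q}a_{s+1}$ for $1\le j,k\le Q$, with $a_r=e^{-i\pi p(r+\beta-1)^2/q}$, $1\le r\le Q$. *)

From Stdlib Require Import Reals ZArith.
Open Scope R_scope.

(* Complex numbers as (real part, imaginary part). *)
Definition C : Type := (R * R)%type.
Definition C0 : C := (0, 0).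
Definition Cadd (z w : C) : C := (fst z + fst w, snd z + snd w).
Definition Cmul (z w : C) : C :=
  (fst z * fst w - snd z * snd w, fst z * snd w + snd z * fst w).
Definition Cscale (a : R) (z : C) : C := (a * fst z, a * snd z).
Definition Cexpi (theta : R) : C := (cos theta, sin theta).

Fixpoint Csum (f : nat -> C) (n : nat) : C :=
  match n with
  | O => C0
  | S m => Cadd (Csum f m) (f m)
  end.

(* P/Q = p/q in lowest terms (q > 0 when Q > 0). *)
Definition red_p (P Q : Z) : Z := (P / Z.gcd P Q)%Z.
Definition red_q (P Q : Z) : Z := (Q / Z.gcd P Q)%Z.

Definition beta (P Q nu : Z) : R := frac_part (IZR nu / IZR P + IZR Q / 2).

Definition a_coef (P Q nu : Z) (r : nat) : C :=
  Cexpi (- PI * IZR (red_p P Q) * (INR r + beta P Q nu - 1) ^ 2 / IZR (red_q P Q)).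

Definition G (P Q nu : Z) (j k : nat) : C :=
  Cscale (1 / IZR Q)
    (Csum (fun s => Cmul (Cexpi (2 * PI * INR s * (INR j - INR k) / IZR Q))
                         (a_coef P Q nu (S s)))
          (Z.to_nat Q)).

Definition dim_d (Q : Z) : nat := Z.to_nat ((Q + 1) / 2)%Z.

Definition nonsingular (d : nat) (M : nat -> nat -> C) : Prop :=
  forall x : nat -> C,
    (forall j, (1 <= j <= d)%nat ->
       Csum (fun i => Cmul (M j (S i)) (x (S i))) d = C0) ->
    forall k, (1 <= k <= d)%nat -> x k = C0.

(* Since gcd(P,Q) = 1, the coefficients a_r sample the quadratic chirp
   s |-> exp(-i pi P (s+beta)^2 / Q), and the discrete Fourier transform of a
   chirp is again a chirp.  Completing the square with a Bezout relation
   b P + v Q = 1 yields the factorisation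
       G_{jk} = K * exp(i rho_j) * exp(i kappa_k) * z_k^j,
       z_k = exp(-2 pi i P b^2 k / Q),
   where K is a multiple of the quadratic Gauss sum sum_{s<Q} exp(-i pi P s(s+Q)/Q).
   So G^(d) is a Vandermonde matrix rescaled by nonzero diagonal factors and
   is nonsingular provided that
   - K <> 0: summing the column k = 0 of G over a full period of j inverts the
     DFT and gives a_1 <> 0, which would vanish if K did;
   - the nodes z_1, ..., z_d are distinct: P b^2 is a unit modulo Q and d <= Q. *)

From Stdlib Require Import Reals ZArith Lra Lia Psatz Field.
From Pilot Require Import Defs.
Open Scope R_scope.

(* The field operations completing C0, Cadd, Cmul of Defs, so that the [ring]
   and [field] tactics work on complex expressions. *)
Definition C1 : C := (1, 0).
Definition Copp (z : C) : C := (- fst z, - snd z).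
Definition Csub (z w : C) : C := Cadd z (Copp w).
Definition Cinv (z : C) : C :=
  (fst z / (fst z * fst z + snd z * snd z), - snd z / (fst z * fst z + snd z * snd z)).
Definition Cdiv (z w : C) : C := Cmul z (Cinv w).

Lemma C_ring : ring_theory C0 C1 Cadd Cmul Csub Copp eq.
Proof.
  constructor; intros; repeat match goal with z : C |- _ => destruct z end;
    unfold C0, C1, Cadd, Cmul, Csub, Copp; simpl; try reflexivity; f_equal; ring.
Qed.

Lemma C_field : field_theory C0 C1 Cadd Cmul Csub Copp Cdiv Cinv eq.
Proof.
  constructor.
  - exact C_ring.
  - unfold C1, C0. intro H. injection H. lra.
  - reflexivity.
  - intros [a b] Hab.
    assert (Hn : a * a + b * b <> 0).
    { intro E. apply Hab. unfold C0. f_equal; nra. }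
    unfold Cinv, Cmul, C1; simpl. f_equal; field; exact Hn.
Qed.

Add Field Cfield : C_field.

Lemma Cmul_eq0_r (c z : C) : c <> C0 -> Cmul c z = C0 -> z = C0.
Proof.
  intros Hc Hcz. transitivity (Cdiv (Cmul c z) c); [field; exact Hc|].
  rewrite Hcz. field. exact Hc.
Qed.

Fixpoint Cpow (z : C) (n : nat) : C :=
  match n with O => C1 | S m => Cmul z (Cpow z m) end.

Lemma Cscale_Cmul (a : R) (z : C) : Cscale a z = Cmul (a, 0) z.
Proof. destruct z; unfold Cscale, Cmul; simpl; f_equal; ring. Qed.

Lemma Cexpi_add (a b : R) : Cmul (Cexpi a) (Cexpi b) = Cexpi (a + b).
Proof. unfold Cmul, Cexpi; simpl. rewrite cos_plus, sin_plus. f_equal; ring. Qed.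

Lemma Cexpi_0 : Cexpi 0 = C1.
Proof. unfold Cexpi, C1. rewrite cos_0, sin_0. reflexivity. Qed.

Lemma Cpow_Cexpi (a : R) (n : nat) : Cpow (Cexpi a) n = Cexpi (INR n * a).
Proof.
  induction n as [|n IH]; cbn [Cpow].
  - rewrite Rmult_0_l, Cexpi_0. reflexivity.
  - rewrite IH, Cexpi_add, S_INR. f_equal. ring.
Qed.

Lemma Cexpi_neq0 (a : R) : Cexpi a <> C0.
Proof.
  unfold Cexpi, C0. intro H. injection H as Hc Hs. pose proof (sin2_cos2 a) as E.
  unfold Rsqr in E. rewrite Hc, Hs in E. lra.
Qed.

Lemma Cexpi_eq (a b : R) (k : Z) : a = b + 2 * PI * IZR k -> Cexpi a = Cexpi b.
Proof.
  assert (Hnat : forall x (n : nat), Cexpi (x + 2 * PI * INR n) = Cexpi x).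
  { intros x n. unfold Cexpi. replace (x + 2 * PI * INR n) with (x + 2 * INR n * PI) by ring.
    rewrite cos_period, sin_period. reflexivity. }
  intros ->. destruct (Z_le_gt_dec 0 k) as [Hk|Hk].
  - rewrite <- (Z2Nat.id k Hk), <- INR_IZR_INZ. apply Hnat.
  - rewrite <- (Hnat _ (Z.to_nat (- k))), INR_IZR_INZ, Z2Nat.id, opp_IZR by lia.
    f_equal. ring.
Qed.

Lemma Cexpi_one (a : R) : Cexpi a = C1 -> exists k : Z, a = 2 * PI * IZR k.
Proof.
  unfold Cexpi, C1. intro H. injection H as Hc _.
  replace a with (2 * (a / 2)) in Hc by field. rewrite cos_2a_sin in Hc.
  assert (Hs : sin (a / 2) = 0) by nra.
  destruct (sin_eq_0_0 _ Hs) as [k Hk]. exists k. lra.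
Qed.

Lemma Cexpi_eq_mod (a b : R) : Cexpi a = Cexpi b -> exists m : Z, a - b = 2 * PI * IZR m.
Proof.
  intros H. apply Cexpi_one.
  replace (a - b) with (a + - b) by ring. rewrite <- Cexpi_add, H, Cexpi_add.
  replace (b + - b) with 0 by ring. apply Cexpi_0.
Qed.

Lemma Csum_ext (f g : nat -> C) (n : nat) :
  (forall i, (i < n)%nat -> f i = g i) -> Csum f n = Csum g n.
Proof.
  induction n as [|n IH]; intros H; cbn [Csum]; [reflexivity|].
  rewrite IH, H by (try intros; try apply H; lia). reflexivity.
Qed.

Lemma Csum_add (f g : nat -> C) (n : nat) :
  Csum (fun i => Cadd (f i) (g i)) n = Cadd (Csum f n) (Csum g n).
Proof. induction n as [|n IH]; cbn [Csum]; [|rewrite IH]; ring. Qed.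

Lemma Csum_scal (c : C) (f : nat -> C) (n : nat) :
  Csum (fun i => Cmul c (f i)) n = Cmul c (Csum f n).
Proof. induction n as [|n IH]; cbn [Csum]; [|rewrite IH]; ring. Qed.

Lemma Csum_zero (f : nat -> C) (n : nat) : (forall i, (i < n)%nat -> f i = C0) -> Csum f n = C0.
Proof.
  intros H. rewrite (Csum_ext f (fun _ => C0)) by exact H. clear H.
  induction n as [|n IH]; cbn [Csum]; [reflexivity|rewrite IH; ring].
Qed.

Lemma Csum_swap (F : nat -> nat -> C) (n m : nat) :
  Csum (fun i => Csum (fun j => F i j) m) n = Csum (fun j => Csum (fun i => F i j) n) m.
Proof.
  induction n as [|n IH]; cbn [Csum].
  - symmetry. apply Csum_zero. reflexivity.
  - rewrite IH, <- Csum_add. reflexivity.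
Qed.

Lemma Csum_first (f : nat -> C) (n : nat) :
  (0 < n)%nat -> (forall i, (0 < i < n)%nat -> f i = C0) -> Csum f n = f O.
Proof.
  intros Hn H. induction n as [|n IH]; [lia|]. cbn [Csum]. destruct n as [|n].
  - cbn [Csum]. ring.
  - rewrite IH, (H (S n)) by (lia || (intros; apply H; lia)). ring.
Qed.

Lemma Csum_C1 (n : nat) : Csum (fun _ => C1) n = (INR n, 0).
Proof.
  induction n as [|n IH]; [reflexivity|]. cbn [Csum]. rewrite IH, S_INR.
  unfold Cadd, C1; simpl. f_equal; ring.
Qed.

Lemma Csum_telescope_shift (h : Z -> C) (n : nat) :
  Cadd (Csum (fun s => h (Z.of_nat s + 1)%Z) n) (h 0%Z)
  = Cadd (Csum (fun s => h (Z.of_nat s)) n) (h (Z.of_nat n)).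
Proof.
  induction n as [|n IH]; cbn [Csum]; [reflexivity|].
  transitivity (Cadd (Cadd (Csum (fun s => h (Z.of_nat s + 1)%Z) n) (h 0%Z))
                     (h (Z.of_nat n + 1)%Z)); [ring|].
  rewrite IH, Nat2Z.inj_succ, <- Z.add_1_r. ring.
Qed.

(* The sum of a q-periodic function over a window of length q does not depend
   on the position of the window; used to absorb the shift produced by
   completing the square. *)
Section PeriodicSums.
Variables (g : Z -> C) (q : nat).
Hypothesis g_periodic : forall u, g (u + Z.of_nat q)%Z = g u.

Lemma Csum_periodic_shift1 (t : Z) :
  Csum (fun s => g (Z.of_nat s + (t + 1))%Z) q = Csum (fun s => g (Z.of_nat s + t)%Z) q.
Proof.
  pose proof (Csum_telescope_shift (fun u => g (u + t)%Z) q) as E. cbn beta in E.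
  replace (Z.of_nat q + t)%Z with (t + Z.of_nat q)%Z in E by lia.
  rewrite g_periodic in E.
  rewrite (Csum_ext _ (fun s => g (Z.of_nat s + 1 + t)%Z)) by (intros; f_equal; lia).
  transitivity (Csub (Cadd (Csum (fun s => g (Z.of_nat s + 1 + t)%Z) q) (g (0 + t)%Z)) (g t)).
  { rewrite Z.add_0_l. ring. }
  rewrite E. ring.
Qed.

Lemma Csum_periodic_shift (t : Z) :
  Csum (fun s => g (Z.of_nat s + t)%Z) q = Csum (fun s => g (Z.of_nat s)) q.
Proof.
  assert (Hn : forall t0 (n : nat), Csum (fun s => g (Z.of_nat s + (t0 + Z.of_nat n))%Z) q
                                  = Csum (fun s => g (Z.of_nat s + t0)%Z) q).
  { intros t0 n. induction n as [|n IH].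
    - apply Csum_ext. intros. f_equal. lia.
    - rewrite <- IH, <- (Csum_periodic_shift1 (t0 + Z.of_nat n)). apply Csum_ext. intros. f_equal. lia. }
  destruct (Z_le_gt_dec 0 t).
  - transitivity (Csum (fun s => g (Z.of_nat s + (0 + Z.of_nat (Z.to_nat t)))%Z) q);
      [|rewrite Hn]; apply Csum_ext; intros; f_equal; lia.
  - rewrite <- (Hn t (Z.to_nat (- t))). apply Csum_ext. intros. f_equal. lia.
Qed.

End PeriodicSums.

(* Row j+1 minus c times row j of a Vandermonde system: the unknown x_i gets
   multiplied by (z_i - c).  With c = z_{d+1} this eliminates the last node. *)
Lemma vandermonde_row_elim (z x : nat -> C) (c : C) (j n : nat) :
  Csum (fun i => Cmul (Cpow (z (S i)) j) (Cmul (Csub (z (S i)) c) (x (S i)))) n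
  = Csub (Csum (fun i => Cmul (Cpow (z (S i)) (S j)) (x (S i))) n)
         (Cmul c (Csum (fun i => Cmul (Cpow (z (S i)) j) (x (S i))) n)).
Proof. induction n as [|n IH]; cbn [Csum]; [ring|]. rewrite IH. cbn [Cpow]. ring. Qed.

Lemma vandermonde_nonsingular (d : nat) : forall z : nat -> C,
  (forall k k', (1 <= k <= d)%nat -> (1 <= k' <= d)%nat -> k <> k' -> z k <> z k') ->
  (forall k, (1 <= k <= d)%nat -> z k <> C0) ->
  nonsingular d (fun j k => Cpow (z k) j).
Proof.
  induction d as [|d IH]; intros z Hdist Hnz x Hx k Hk; [lia|].
  set (c := z (S d)).
  assert (Hlow : forall k, (1 <= k <= d)%nat -> x k = C0).
  { intros k0 Hk0. apply (Cmul_eq0_r (Csub (z k0) c)).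
    { intro E. apply (Hdist k0 (S d)); try lia.
      transitivity (Cadd (Csub (z k0) c) c); [ring|]. rewrite E. unfold c. ring. }
    apply (IH z ltac:(intros; apply Hdist; lia) ltac:(intros; apply Hnz; lia)
             (fun k => Cmul (Csub (z k) c) (x k))); [|lia].
    intros j Hj.
    set (F := fun i => Cmul (Cpow (z (S i)) j) (Cmul (Csub (z (S i)) c) (x (S i)))).
    assert (Hlast : Csum F d = Csum F (S d)) by (cbn [Csum]; unfold F, c; ring).
    rewrite Hlast. unfold F. rewrite vandermonde_row_elim, (Hx (S j)), (Hx j) by lia. ring. }
  destruct (Nat.eq_dec k (S d)) as [->|Hne]; [|apply Hlow; lia].
  apply (Cmul_eq0_r (z (S d))); [apply Hnz; lia|].
  pose proof (Hx 1%nat ltac:(lia)) as E1. cbn [Csum] in E1.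
  rewrite Csum_zero in E1 by (intros i Hi; rewrite (Hlow (S i)) by lia; ring).
  rewrite <- E1. cbn [Cpow]. ring.
Qed.

Lemma nonsingular_rescale (d : nat) (M N : nat -> nat -> C) (c : C) (u v : nat -> C) :
  c <> C0 ->
  (forall j, (1 <= j <= d)%nat -> u j <> C0) ->
  (forall k, (1 <= k <= d)%nat -> v k <> C0) ->
  (forall j k, (1 <= j <= d)%nat -> (1 <= k <= d)%nat ->
     M j k = Cmul c (Cmul (u j) (Cmul (v k) (N j k)))) ->
  nonsingular d N -> nonsingular d M.
Proof.
  intros Hc Hu Hv HM HN x Hx k Hk.
  apply (Cmul_eq0_r (v k)); [apply Hv, Hk|].
  apply (HN (fun k => Cmul (v k) (x k))); [|exact Hk].
  intros j Hj. apply (Cmul_eq0_r c); [exact Hc|]. apply (Cmul_eq0_r (u j)); [exact (Hu j Hj)|].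
  rewrite <- (Hx j Hj), <- !Csum_scal. apply Csum_ext.
  intros i Hi. rewrite HM by lia. ring.
Qed.

Lemma Cpow_geometric (w : C) (n : nat) :
  Cmul (Csub w C1) (Csum (Cpow w) n) = Csub (Cpow w n) C1.
Proof.
  induction n as [|n IH]; cbn [Csum Cpow]; [ring|].
  transitivity (Cadd (Cmul (Csub w C1) (Csum (Cpow w) n)) (Cmul (Csub w C1) (Cpow w n))); [ring|].
  rewrite IH. ring.
Qed.

Lemma roots_of_unity_sum (q s : nat) : (0 < s < q)%nat ->
  Csum (fun m => Cexpi (2 * PI * INR s * INR m / INR q)) q = C0.
Proof.
  intros Hs.
  assert (Hq : INR q <> 0) by (apply not_0_INR; lia).
  set (w := Cexpi (2 * PI * INR s / INR q)).
  rewrite (Csum_ext _ (Cpow w)) by (intros m _; unfold w; rewrite Cpow_Cexpi; f_equal; field; exact Hq).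
  assert (Hw : Csub w C1 <> C0).
  { intro E. assert (Hw1 : w = C1).
    { transitivity (Cadd (Csub w C1) C1); [ring|]. rewrite E. ring. }
    destruct (Cexpi_one _ Hw1) as [m Hm].
    assert (Hsm : INR s = IZR m * INR q).
    { apply (Rmult_eq_reg_l (2 * PI)); [|pose proof PI_RGT_0; lra].
      transitivity (2 * PI * INR s / INR q * INR q); [field; exact Hq|]. rewrite Hm. ring. }
    rewrite !INR_IZR_INZ, <- mult_IZR in Hsm. apply eq_IZR in Hsm.
    destruct (Z_le_gt_dec m 0); nia. }
  assert (Hwq : Cpow w q = C1).
  { unfold w. rewrite Cpow_Cexpi, <- Cexpi_0. apply Cexpi_eq with (k := Z.of_nat s).
    rewrite <- INR_IZR_INZ. field. exact Hq. }
  apply (Cmul_eq0_r _ _ Hw). rewrite Cpow_geometric, Hwq. ring.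
Qed.

Lemma G_column_sum (P Q nu : Z) : (1 <= Q)%Z ->
  Csum (fun m => G P Q nu m 0) (Z.to_nat Q) = a_coef P Q nu 1.
Proof.
  intros HQ. set (q := Z.to_nat Q).
  assert (HQq : IZR Q = INR q) by (unfold q; rewrite INR_IZR_INZ, Z2Nat.id by lia; reflexivity).
  assert (Hq : INR q <> 0) by (apply not_0_INR; unfold q; lia).
  set (a := fun s => a_coef P Q nu (S s)).
  rewrite (Csum_ext _ (fun m => Cmul (1 / INR q, 0)
      (Csum (fun s => Cmul (a s) (Cexpi (2 * PI * INR s * INR m / INR q))) q))).
  2:{ intros m _. unfold G. rewrite Cscale_Cmul, HQq. f_equal. apply Csum_ext. intros s _.
      replace (INR m - INR 0) with (INR m) by (simpl; ring). unfold a. ring. }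
  rewrite Csum_scal, Csum_swap.
  rewrite (Csum_ext _ (fun s => Cmul (a s)
      (Csum (fun m => Cexpi (2 * PI * INR s * INR m / INR q)) q))) by (intros; apply Csum_scal).
  rewrite Csum_first by (unfold q; lia ||
    (intros s Hs; rewrite roots_of_unity_sum by exact Hs; ring)).
  rewrite (Csum_ext _ (fun _ => C1)), Csum_C1.
  2:{ intros m _. rewrite <- Cexpi_0. f_equal. simpl INR. field. exact Hq. }
  unfold a. destruct (a_coef P Q nu 1) as [x y]. unfold Cmul; simpl. f_equal; field; exact Hq.
Qed.

Definition chirp_phase (P Q : Z) (u : R) : R := - PI * IZR P * u * (u + IZR Q) / IZR Q.
Definition chirp (P Q : Z) (u : Z) : C := Cexpi (chirp_phase P Q (IZR u)).
(* beta = nu/P + Q/2 - beta_floor, so P beta = P Q/2 - beta_shift with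
   beta_shift an integer. *)
Definition beta_floor (P Q nu : Z) : Z := Int_part (IZR nu / IZR P + IZR Q / 2).
Definition beta_shift (P Q nu : Z) : Z := (P * beta_floor P Q nu - nu)%Z.
Definition row_phase (P Q nu b : Z) (j : nat) : R :=
  PI * IZR P * IZR b * (IZR b * (INR j + IZR (beta_shift P Q nu)) ^ 2
                        - IZR Q * (INR j + IZR (beta_shift P Q nu))) / IZR Q.
Definition col_phase (P Q nu b : Z) (k : nat) : R :=
  PI * IZR P * IZR b * (IZR b * INR k ^ 2 - 2 * IZR b * IZR (beta_shift P Q nu) * INR k
                        + IZR Q * INR k) / IZR Q.
Definition node (P Q b : Z) (k : nat) : C := Cexpi (- 2 * PI * IZR P * IZR b ^ 2 * INR k / IZR Q).
Definition gauss_const (P Q nu : Z) : C :=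
  Cmul (1 / IZR Q, 0) (Cmul (Cexpi (- PI * IZR P * beta P Q nu ^ 2 / IZR Q))
                            (Csum (fun s => chirp P Q (Z.of_nat s)) (Z.to_nat Q))).

Lemma beta_eq (P Q nu : Z) :
  beta P Q nu = IZR nu / IZR P + IZR Q / 2 - IZR (beta_floor P Q nu).
Proof. reflexivity. Qed.

Lemma chirp_periodic (P Q u : Z) : (1 <= Q)%Z ->
  chirp P Q (u + Z.of_nat (Z.to_nat Q))%Z = chirp P Q u.
Proof.
  intros HQ. rewrite Z2Nat.id by lia. unfold chirp.
  apply Cexpi_eq with (k := (- P * (u + Q))%Z).
  assert (IZR Q <> 0) by (apply not_0_IZR; lia).
  unfold chirp_phase. rewrite plus_IZR, mult_IZR, opp_IZR, plus_IZR. field. assumption.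
Qed.

(* Each term of the sum defining G is, after completing the square, a fixed
   phase times the chirp at s - b (j - k + beta_shift); periodicity of the
   chirp removes the shift. *)
Lemma G_factorization (P Q nu b v : Z) (j k : nat) :
  P <> 0%Z -> (1 <= Q)%Z -> Z.gcd P Q = 1%Z -> (b * P + v * Q = 1)%Z ->
  G P Q nu j k = Cmul (gauss_const P Q nu)
    (Cmul (Cexpi (row_phase P Q nu b j)) (Cmul (Cexpi (col_phase P Q nu b k)) (Cpow (node P Q b k) j))).
Proof.
  intros HP HQ Hg Hb.
  assert (Hq : IZR Q <> 0) by (apply not_0_IZR; lia).
  assert (Hp : IZR P <> 0) by (apply not_0_IZR; lia).
  assert (Hv : IZR v = (1 - IZR b * IZR P) / IZR Q).
  { apply (f_equal IZR) in Hb. rewrite plus_IZR, !mult_IZR in Hb.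
    field_simplify_eq; [lra | exact Hq]. }
  unfold G, a_coef, red_p, red_q. rewrite Hg, !Z.div_1_r, Cscale_Cmul.
  set (m := (Z.of_nat j - Z.of_nat k + beta_shift P Q nu)%Z).
  set (E := - PI * IZR P * beta P Q nu ^ 2 / IZR Q + row_phase P Q nu b j + col_phase P Q nu b k
            + INR j * (- 2 * PI * IZR P * IZR b ^ 2 * INR k / IZR Q)).
  (* Completing the square, modulo 2 pi, using v = (1 - b P)/Q. *)
  assert (Hterm : forall s : nat,
    Cmul (Cexpi (2 * PI * INR s * (INR j - INR k) / IZR Q))
         (Cexpi (- PI * IZR P * (INR (S s) + beta P Q nu - 1) ^ 2 / IZR Q))
    = Cmul (Cexpi E) (chirp P Q (Z.of_nat s + - b * m)%Z)).
  { intros s. unfold chirp. rewrite !Cexpi_add.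
    apply Cexpi_eq with (k := (v * m * Z.of_nat s)%Z).
    unfold m, E, chirp_phase, row_phase, col_phase, beta_shift.
    repeat rewrite ?mult_IZR, ?plus_IZR, ?minus_IZR, ?opp_IZR.
    rewrite <- !INR_IZR_INZ, Hv, beta_eq, S_INR. field. split; assumption. }
  rewrite (Csum_ext _ _ _ (fun s _ => Hterm s)), Csum_scal,
          (Csum_periodic_shift (chirp P Q)) by (intros; apply chirp_periodic, HQ).
  unfold gauss_const, node, E. rewrite Cpow_Cexpi, <- !Cexpi_add. ring.
Qed.

(* K <> 0: otherwise every entry of G vanishes, contradicting G_column_sum. *)
Lemma gauss_const_neq0 (P Q nu b v : Z) :
  P <> 0%Z -> (1 <= Q)%Z -> Z.gcd P Q = 1%Z -> (b * P + v * Q = 1)%Z ->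
  gauss_const P Q nu <> C0.
Proof.
  intros HP HQ Hg Hb HK.
  apply (Cexpi_neq0 (- PI * IZR (red_p P Q) * (INR 1 + beta P Q nu - 1) ^ 2 / IZR (red_q P Q))).
  change (a_coef P Q nu 1 = C0). rewrite <- G_column_sum by exact HQ.
  apply Csum_zero. intros m _. rewrite (G_factorization P Q nu b v) by assumption.
  rewrite HK. ring.
Qed.

(* The nodes z_1, ..., z_Q are distinct: z_k = z_k' forces Q | P b^2 (k'-k),
   hence Q | k'-k by coprimality, hence k = k'. *)
Lemma node_injective (P Q b v : Z) (k k' : nat) :
  (1 <= Q)%Z -> Z.gcd P Q = 1%Z -> (b * P + v * Q = 1)%Z ->
  (1 <= k <= Z.to_nat Q)%nat -> (1 <= k' <= Z.to_nat Q)%nat ->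
  node P Q b k = node P Q b k' -> k = k'.
Proof.
  intros HQ Hg Hb Hk Hk' E.
  assert (Hq : IZR Q <> 0) by (apply not_0_IZR; lia).
  destruct (Cexpi_eq_mod _ _ E) as [m Hm].
  set (r := (Z.of_nat k' - Z.of_nat k)%Z).
  assert (Hdiv : (Q | P * (b * (b * r)))%Z).
  { exists m. apply eq_IZR. unfold r. repeat rewrite ?mult_IZR, ?minus_IZR.
    rewrite <- !INR_IZR_INZ.
    assert (PI <> 0) by (pose proof PI_RGT_0; lra).
    apply (Rmult_eq_reg_l (2 * PI / IZR Q)); [|apply Rmult_integral_contrapositive_currified;
      [lra|apply Rinv_neq_0_compat; exact Hq]].
    transitivity (- 2 * PI * IZR P * IZR b ^ 2 * INR k / IZR Q
                  - - 2 * PI * IZR P * IZR b ^ 2 * INR k' / IZR Q); [field; exact Hq|].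
    rewrite Hm. field. exact Hq. }
  assert (HQb : Z.gcd Q b = 1%Z) by (apply Z.bezout_1_gcd; exists v, P; lia).
  assert (HQP : Z.gcd Q P = 1%Z) by (rewrite Z.gcd_comm; exact Hg).
  apply Z.gauss in Hdiv; [|exact HQP]. apply Z.gauss in Hdiv; [|exact HQb].
  apply Z.gauss in Hdiv; [|exact HQb].
  destruct Hdiv as [c Hc]. unfold r in Hc.
  destruct (Z_le_gt_dec c 0); [destruct (Z.eq_dec c 0)|]; nia.
Qed.

(* G^(d) is a rescaled Vandermonde matrix on the distinct nodes z_1..z_d. *)
Theorem lemma2 (P Q nu : Z) :
  (1 <= Q)%Z -> P <> 0%Z -> Z.gcd P Q = 1%Z ->
  nonsingular (dim_d Q) (G P Q nu).
Proof.
  intros HQ HP Hg.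
  destruct (Z.gcd_bezout P Q 1 Hg) as [b [v Hb]].
  assert (Hdq : (dim_d Q <= Z.to_nat Q)%nat).
  { unfold dim_d. apply Z2Nat.inj_le; [apply Z.div_pos; lia | lia |].
    apply Z.div_le_upper_bound; lia. }
  apply (nonsingular_rescale (dim_d Q) _ (fun j k => Cpow (node P Q b k) j)
           (gauss_const P Q nu) (fun j => Cexpi (row_phase P Q nu b j))
           (fun k => Cexpi (col_phase P Q nu b k))).
  - exact (gauss_const_neq0 P Q nu b v HP HQ Hg Hb).
  - intros; apply Cexpi_neq0.
  - intros; apply Cexpi_neq0.
  - intros j k _ _. exact (G_factorization P Q nu b v j k HP HQ Hg Hb).
  - apply vandermonde_nonsingular.
    + intros k k' Hk Hk' Hne E. apply Hne.
      apply (node_injective P Q b v); auto; lia.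
    + intros; apply Cexpi_neq0.
Qed.
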